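(* Let $\mathcal{H}=\mathbb{C}^3$, written in block form $\mathbb{C}\oplus\mathbb{C}^2$. Let $Q=\{\pm I,\pm i\sigma_1,\pm i\sigma_2,\pm i\sigma_3\}\subset M_2(\mathbb{C})$ be the quaternion group and define the unitary representation $U(g)=\begin{pmatrix}1&0\\0&g\end{pmatrix}$, $g\in Q$, on $\mathbb{C}^3$. Fix $\lambda>0$ and let $T=\begin{pmatrix}2\lambda&0\\0&-\lambda I_{2}\end{pmatrix}$. Let $$M=\tfrac18 I+\alpha_1\begin{pmatrix}0&0\\0&\sigma_1\end{pmatrix}+\alpha_2\begin{pmatrix}0&0\\0&\sigma_2\end{pmatrix}+\alpha_3\begin{pmatrix}0&0\\0&\sigma_3\end{pmatrix}+\begin{pmatrix}0&\bar v^t\\ v&0\end{pmatrix},$$ where $\alpha_1,\alpha_2,\alpha_3\in\mathbb{R}$ and $v\in\mathbb{C}^2$ (a column vector, $\bar v^t$ its conjugate transpose) satisfy $\alpha_1\neq0$, $\alpha_2\neq0$, $\alpha_3\neq0$, $v\neq0$, and $M\geq 0$. Then the map $\mathsf{M}(g)=U(g)MU(g)^*$, $g\in Q$, is a $U$-covariant observable on $Q$, and the linear span of $\{\mathsf{M}(g):g\in Q\}$ equals the Hilbert–Schmidt orthogonal complement $T^\perp=\{L\in M_3(\mathbb{C}):\mathrm{tr}(TL)=0\}$. Hence $\mathsf{M}$ is a pure-state informationally complete observable with $8$ outcomes, the minimal number of outcomes of a pure-state informationally complete observable on $\mathbb{C}^3$.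
   Context: $\sigma_1,\sigma_2,\sigma_3$ are the Pauli matrices and $I$ the identity matrix. An observable with finite outcome set $\Omega$ is a map $\mathsf{M}$ from $\Omega$ to positive operators on $\mathcal{H}$ with $\sum_{x\in\Omega}\mathsf{M}(x)=I$. It is pure-state informationally complete (PIC) if for any two different pure states (rank-one projections) $\varrho_1\neq\varrho_2$ there is $x\in\Omega$ with $\mathrm{tr}(\varrho_1\mathsf{M}(x))\neq\mathrm{tr}(\varrho_2\mathsf{M}(x))$. An observable $\mathsf{M}$ on $\Omega=Q$ is $U$-covariant if $U(g)\mathsf{M}(x)U(g)^*=\mathsf{M}(gx)$ for all $g,x\in Q$. The space of $3\times3$ matrices carries the Hilbert–Schmidt inner product $\langle L_1,L_2\rangle=\mathrm{tr}(L_1^*L_2)$. *)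

(* The field of complex numbers is taken to be an arbitrary
   numClosedFieldType C (e.g. algC, or R[i] for a real closed R); the
   statement is purely algebraic, so this is a generalization of C = ℂ. *)
From HB Require Import structures.
From mathcomp Require Import all_boot all_order all_algebra.
Set Implicit Arguments. Unset Strict Implicit. Unset Printing Implicit Defensive.
Import Order.TTheory GRing.Theory Num.Theory.
Local Open Scope ring_scope.

Section Defs.
Variable C : numClosedFieldType.

Definition adjmx m n (A : 'M[C]_(m, n)) : 'M[C]_(n, m) := (map_mx Num.conj A)^T.

Definition psd n (A : 'M[C]_n) : Prop :=
  forall x : 'cV[C]_n, 0 <= (adjmx x *m A *m x) 0 0.

Definition pure_state n (rho : 'M[C]_n) : Prop :=
  adjmx rho = rho /\ rho *m rho = rho /\ \rank rho = 1%N.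

Definition mx2 (a b c d : C) : 'M[C]_2 :=
  \matrix_(i < 2, j < 2)
    if (i : nat) == 0%N then (if (j : nat) == 0%N then a else b)
    else (if (j : nat) == 0%N then c else d).

Definition sigma1 : 'M[C]_2 := mx2 0 1 1 0.
Definition sigma2 : 'M[C]_2 := mx2 0 (- 'i) 'i 0.
Definition sigma3 : 'M[C]_2 := mx2 1 0 0 (-1).

Definition Qgrp : seq 'M[C]_2 :=
  [:: 1%:M; - 1%:M; 'i *: sigma1; - ('i *: sigma1);
      'i *: sigma2; - ('i *: sigma2); 'i *: sigma3; - ('i *: sigma3)].

Definition Urep (g : 'M[C]_2) : 'M[C]_(1 + 2) := block_mx 1%:M 0 0 g.

Definition Tmx (lam : C) : 'M[C]_(1 + 2) :=
  block_mx (2 * lam)%:M 0 0 (- lam)%:M.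

Definition Mseed (a1 a2 a3 : C) (v : 'cV[C]_2) : 'M[C]_(1 + 2) :=
  (8%:R^-1)%:M
  + block_mx 0 0 0 (a1 *: sigma1)
  + block_mx 0 0 0 (a2 *: sigma2)
  + block_mx 0 0 0 (a3 *: sigma3)
  + block_mx 0 (adjmx v) v 0.

Definition Mobs (M : 'M[C]_(1 + 2)) (g : 'M[C]_2) : 'M[C]_(1 + 2) :=
  Urep g *m M *m adjmx (Urep g).

Definition observable n (Om : seq 'M[C]_2) (F : 'M[C]_2 -> 'M[C]_n) : Prop :=
  uniq Om /\ (forall x, x \in Om -> psd (F x)) /\ \sum_(x <- Om) F x = 1%:M.

Definition covariant n (Om : seq 'M[C]_2) (U : 'M[C]_2 -> 'M[C]_n)
    (F : 'M[C]_2 -> 'M[C]_n) : Prop :=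
  forall g x, g \in Om -> x \in Om -> U g *m F x *m adjmx (U g) = F (g *m x).

Definition PIC n (Om : seq 'M[C]_2) (F : 'M[C]_2 -> 'M[C]_n) : Prop :=
  forall rho1 rho2 : 'M[C]_n, pure_state rho1 -> pure_state rho2 ->
    rho1 <> rho2 -> exists2 x, x \in Om & \tr (rho1 *m F x) != \tr (rho2 *m F x).

End Defs.

(* The eight effects come in pairs U(g) M U(g)^* and U(-g) M U(-g)^* with
   g in {1, i s1, i s2, i s3}: the sum of a pair keeps the block-diagonal part
   of M, the difference its off-diagonal part.  Conjugation by i sk flips the
   signs of the two other Pauli coefficients of the lower block, so, as the
   a_k are nonzero, the four sums span through a Hadamard matrix the identity
   and the blocks diag(0, sk); and since the quaternion units move v != 0 to
   four vectors spanning C^2 over R, the four differences span all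
   off-diagonal blocks.  These eight matrices span the hyperplane
   tr(T L) = 0, which contains every effect.  Two pure states with equal
   statistics then differ by a matrix of rank at most 2 annihilating this
   hyperplane, i.e. by a multiple of the invertible T, hence by 0. *)

From HB Require Import structures.
From mathcomp Require Import all_boot all_order all_algebra ring.
Set Implicit Arguments. Unset Strict Implicit. Unset Printing Implicit Defensive.
Import Order.TTheory GRing.Theory Num.Theory.
Local Open Scope ring_scope.

Section Adjoint.
Variable C : numClosedFieldType.

Lemma adjmxM m n p (A : 'M[C]_(m, n)) (B : 'M[C]_(n, p)) :
  adjmx (A *m B) = adjmx B *m adjmx A.
Proof. by rewrite /adjmx map_mxM trmx_mul. Qed.

Lemma adjmxK m n (A : 'M[C]_(m, n)) : adjmx (adjmx A) = A.
Proof. by apply/matrixP => i j; rewrite !mxE conjCK. Qed.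

Lemma adjmx0 m n : adjmx (0 : 'M[C]_(m, n)) = 0.
Proof. by apply/matrixP => i j; rewrite !mxE conjC0. Qed.

Lemma adjmx1 n : adjmx (1%:M : 'M[C]_n) = 1%:M.
Proof. by apply/matrixP => i j; rewrite !mxE rmorph_nat eq_sym. Qed.

Lemma adjmxN m n (A : 'M[C]_(m, n)) : adjmx (- A) = - adjmx A.
Proof. by rewrite /adjmx map_mxN linearN. Qed.

Lemma adjmx_block m1 m2 n1 n2 (A : 'M[C]_(m1, n1)) (B : 'M[C]_(m1, n2))
    (D : 'M[C]_(m2, n1)) (E : 'M[C]_(m2, n2)) :
  adjmx (block_mx A B D E) = block_mx (adjmx A) (adjmx D) (adjmx B) (adjmx E).
Proof. by rewrite /adjmx map_block_mx tr_block_mx. Qed.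

Lemma psd_congr n (U M : 'M[C]_n) : psd M -> psd (U *m M *m adjmx U).
Proof. by move=> psdM x; have := psdM (adjmx U *m x); rewrite adjmxM adjmxK !mulmxA. Qed.

End Adjoint.

Section TraceDuality.
Variable F : fieldType.

Lemma mxtrace_mul_delta n (X : 'M[F]_n) i j : \tr (X *m delta_mx i j) = X j i.
Proof.
rewrite /mxtrace (bigD1 j) //= big1 ?addr0 => [|k kj].
  rewrite mxE (bigD1 i) //= big1 ?addr0 => [|l li]; first by rewrite mxE !eqxx mulr1.
  by rewrite mxE (negbTE li) mulr0.
by rewrite mxE big1 // => l _; rewrite mxE eq_sym (negbTE kj) andbF mulr0.
Qed.

Lemma mxtrace_annihilator n (T X : 'M[F]_n) :
  T != 0 -> (forall L, \tr (T *m L) = 0 -> \tr (X *m L) = 0) ->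
  exists c, X = c *: T.
Proof.
move=> T0 annX.
have [[j i] Tji] : exists ji : 'I_n * 'I_n, T ji.1 ji.2 != 0.
  apply/existsP; apply: contraR T0 => /existsPn T0.
  by apply/eqP/matrixP => k l; rewrite mxE; have := T0 (k, l); rewrite negbK => /eqP.
pose L0 := (T j i)^-1 *: delta_mx i j.
have trTL0 : \tr (T *m L0) = 1 by rewrite -scalemxAr mxtraceZ mxtrace_mul_delta mulVf.
clearbody L0.
exists (\tr (X *m L0)); apply/matrixP => l k; rewrite mxE.
have := annX (delta_mx k l - T l k *: L0).
rewrite !mulmxBr -!scalemxAr !raddfB /= !mxtraceZ !mxtrace_mul_delta trTL0 mulr1 subrr.
by move/(_ erefl)/eqP; rewrite subr_eq0 mulrC => /eqP.
Qed.

End TraceDuality.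

Section PureStates.
Variable C : numClosedFieldType.

Lemma PIC_of_kernel_span n (Om : seq 'M[C]_2) (E : 'M[C]_2 -> 'M[C]_n) (T : 'M[C]_n) :
  (2 < n)%N -> T \in unitmx ->
  (forall L, \tr (T *m L) = 0 -> exists c : 'M[C]_2 -> C, L = \sum_(x <- Om) c x *: E x) ->
  PIC Om E.
Proof.
move=> n_gt2 Tu spanE r1 r2 [_ [_ rk1]] [_ [_ rk2]] r12.
have [/hasP //|/hasPn same] := boolP (has (fun x => \tr (r1 *m E x) != \tr (r2 *m E x)) Om).
have T0 : T != 0 by apply: contraTneq n_gt2 => T0; rewrite -(mxrank_unit Tu) T0 mxrank0.
have [c defX] : exists c, r1 - r2 = c *: T.
  apply: mxtrace_annihilator => // L /spanE [d ->].
  rewrite mulmx_sumr raddf_sum big1_seq //= => x xOm.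
  rewrite -scalemxAr mxtraceZ mulmxBl raddfB /=.
  by move/negPn/eqP: (same x xOm) => ->; rewrite subrr mulr0.
have [c0|c_neq0] := eqVneq c 0.
  by case: r12; apply/eqP; rewrite -subr_eq0 defX c0 scale0r.
have : (\rank (r1 - r2)%R <= 2)%N by rewrite (leq_trans (mxrank_add _ _)) // mxrank_opp rk1 rk2.
by rewrite defX mxrank_unit ?unitmxZ ?unitfE // leqNgt n_gt2.
Qed.

End PureStates.

Lemma memv_span_coord (K : fieldType) (vT : vectType K) (I : eqType) (s : seq I)
    (E : I -> vT) v :
  uniq s -> v \in <<map E s>>%VS -> exists c : I -> K, v = \sum_(x <- s) c x *: E x.
Proof.
move=> s_uniq; pose S := in_tuple s; pose X := map_tuple E S.
have /tuple_uniqP S_inj : uniq S := s_uniq.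
move=> /(@coord_span _ _ _ X) ->.
exists (fun x => \sum_(i | tnth S i == x) coord X i v).
rewrite [RHS]big_tnth; apply: eq_bigr => j _.
rewrite (big_pred1 j) => [|i]; last by apply/eqP/eqP => [/S_inj|->].
by rewrite (nth_map (tnth S j)) ?size_tuple // -tnth_nth.
Qed.

Ltac conjC_simpl :=
  rewrite ?(rmorphM, rmorphN, rmorphD, rmorphB) /= ?conjCi ?conjC0 ?conjC1 ?conjCK.

Section TwoByTwo.
Variable C : numClosedFieldType.
Implicit Types a b c d x : C.

Lemma mx2_eta (A : 'M[C]_2) : A = mx2 (A 0 0) (A 0 1) (A 1 0) (A 1 1).
Proof.
apply/matrixP => i j; rewrite mxE.
by case: i => [[|[|i]] ?] //; case: j => [[|[|j]] ?] //=; congr (A _ _); apply: val_inj.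
Qed.

Lemma mx2_add a b c d a' b' c' d' :
  mx2 a b c d + mx2 a' b' c' d' = mx2 (a + a') (b + b') (c + c') (d + d').
Proof. by rewrite [LHS]mx2_eta !mxE. Qed.

Lemma mx2_scale x a b c d : x *: mx2 a b c d = mx2 (x * a) (x * b) (x * c) (x * d).
Proof. by rewrite [LHS]mx2_eta !mxE. Qed.

Lemma mx2_scalar x : x%:M = mx2 x 0 0 x.
Proof. by rewrite [LHS]mx2_eta !mxE. Qed.

Lemma mx2_mul a b c d a' b' c' d' :
  mx2 a b c d *m mx2 a' b' c' d' =
  mx2 (a * a' + b * c') (a * b' + b * d') (c * a' + d * c') (c * b' + d * d').
Proof. by rewrite [LHS]mx2_eta !mxE !big_ord_recl !big_ord0 !mxE /= !addr0. Qed.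

Lemma mx2_adj a b c d : adjmx (mx2 a b c d) = mx2 a^* c^* b^* d^*.
Proof. by rewrite [LHS]mx2_eta !mxE. Qed.

Lemma ord2P (i : 'I_2) : i = ord0 \/ i = lift ord0 ord0.
Proof. by case: i => [[|[|i]] ?] //; [left | right]; apply: val_inj. Qed.

Lemma lift0_ord2 : lift ord0 ord0 = 1 :> 'I_2.
Proof. exact: val_inj. Qed.

Lemma mulCii : 'i * 'i = -1 :> C. Proof. by rewrite -expr2 sqrCi. Qed.

End TwoByTwo.

Section Pauli.
Variable C : numClosedFieldType.
Implicit Types b c x : C.

Definition pauli b0 b1 b2 b3 : 'M[C]_2 :=
  b0%:M + b1 *: sigma1 C + b2 *: sigma2 C + b3 *: sigma3 C.

Lemma pauliE b0 b1 b2 b3 :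
  pauli b0 b1 b2 b3 = mx2 (b0 + b3) (b1 - 'i * b2) (b1 + 'i * b2) (b0 - b3).
Proof.
rewrite /pauli /sigma1 /sigma2 /sigma3 mx2_scalar !mx2_scale !mx2_add.
by congr mx2; ring.
Qed.

Lemma pauli_mx (A : 'M[C]_2) :
  A = pauli ((A 0 0 + A 1 1) / 2) ((A 0 1 + A 1 0) / 2)
            ('i * (A 0 1 - A 1 0) / 2) ((A 0 0 - A 1 1) / 2).
Proof.
rewrite pauliE [LHS]mx2_eta.
by congr mx2; field: (mulCii C).
Qed.

Lemma pauliD b0 b1 b2 b3 c0 c1 c2 c3 :
  pauli b0 b1 b2 b3 + pauli c0 c1 c2 c3 = pauli (b0 + c0) (b1 + c1) (b2 + c2) (b3 + c3).
Proof. by rewrite !pauliE mx2_add; congr mx2; ring. Qed.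

Lemma pauliZ x b0 b1 b2 b3 :
  x *: pauli b0 b1 b2 b3 = pauli (x * b0) (x * b1) (x * b2) (x * b3).
Proof. by rewrite !pauliE mx2_scale; congr mx2; ring. Qed.

Lemma pauli_scalar x : pauli x 0 0 0 = x%:M.
Proof. by rewrite /pauli !scale0r !addr0. Qed.

Lemma mxtrace_pauli b0 b1 b2 b3 : \tr (pauli b0 b1 b2 b3) = 2 * b0.
Proof. by rewrite pauliE /mxtrace !big_ord_recl big_ord0 !mxE /=; ring. Qed.

Lemma pauli_conj_id b0 b1 b2 b3 :
  1%:M *m pauli b0 b1 b2 b3 *m adjmx 1%:M = pauli b0 b1 b2 b3.
Proof. by rewrite adjmx1 mul1mx mulmx1. Qed.

Lemma pauli_conj_sigma1 b0 b1 b2 b3 :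
  'i *: sigma1 C *m pauli b0 b1 b2 b3 *m adjmx ('i *: sigma1 C) = pauli b0 b1 (- b2) (- b3).
Proof.
rewrite !pauliE /sigma1 !mx2_scale mx2_adj !mx2_mul.
by conjC_simpl; congr mx2; ring: (mulCii C).
Qed.

Lemma pauli_conj_sigma2 b0 b1 b2 b3 :
  'i *: sigma2 C *m pauli b0 b1 b2 b3 *m adjmx ('i *: sigma2 C) = pauli b0 (- b1) b2 (- b3).
Proof.
rewrite !pauliE /sigma2 !mx2_scale mx2_adj !mx2_mul.
by conjC_simpl; congr mx2; ring: (mulCii C).
Qed.

Lemma pauli_conj_sigma3 b0 b1 b2 b3 :
  'i *: sigma3 C *m pauli b0 b1 b2 b3 *m adjmx ('i *: sigma3 C) = pauli b0 (- b1) (- b2) b3.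
Proof.
rewrite !pauliE /sigma3 !mx2_scale mx2_adj !mx2_mul.
by conjC_simpl; congr mx2; ring: (mulCii C).
Qed.

End Pauli.

Section Covariance.
Variable C : numClosedFieldType.
Implicit Types g h : 'M[C]_2.

Lemma Urep_mul g h : Urep g *m Urep h = Urep (g *m h).
Proof. by rewrite /Urep mulmx_block !mulmx0 !mul0mx !addr0 !add0r mulmx1. Qed.

Lemma Mobs_covariant (M : 'M[C]_(1 + 2)) g h :
  Urep g *m Mobs M h *m adjmx (Urep g) = Mobs M (g *m h).
Proof. by rewrite /Mobs -Urep_mul !adjmxM !mulmxA. Qed.

Lemma Mobs_block (A : 'M[C]_1) (r : 'rV[C]_2) (w : 'cV[C]_2) (D : 'M[C]_2) g :
  Mobs (block_mx A r w D) g = block_mx A (r *m adjmx g) (g *m w) (g *m D *m adjmx g).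
Proof.
rewrite /Mobs /Urep adjmx_block adjmx1 !adjmx0 !mulmx_block.
by rewrite !mulmx0 !mul0mx !mulmx1 !mul1mx !addr0 !add0r.
Qed.

End Covariance.

Section Quaternions.
Variable C : numClosedFieldType.

Lemma mx2_opp a b c d : - mx2 a b c d = mx2 (- a) (- b) (- c) (- d) :> 'M[C]_2.
Proof. by rewrite [LHS]mx2_eta !mxE. Qed.

Lemma Qgrp_unitary g : g \in Qgrp C -> adjmx g *m g = 1%:M.
Proof.
rewrite /Qgrp /sigma1 /sigma2 /sigma3 mx2_scalar !mx2_scale !mx2_opp !inE.
by do ![case/orP=> [/eqP-> | ] | move/eqP->];
  rewrite mx2_adj mx2_mul; conjC_simpl; congr mx2; ring: (mulCii C).
Qed.

(* An affine combination of real and imaginary parts of two entries takes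
   eight distinct natural values on Q. *)
Lemma Qgrp_uniq : uniq (Qgrp C).
Proof.
pose code (g : 'M[C]_2) :=
  'Re (g 0 0) + 2 * 'Im (g 0 0) + 3 * 'Re (g 0 1) + 4 * 'Im (g 0 1) + 4.
apply: (@map_uniq _ _ code).
have -> : map code (Qgrp C) = map (GRing.natmul 1) [:: 5; 3; 8; 0; 7; 1; 6; 2]%N.
  rewrite /= /code /sigma1 /sigma2 /sigma3 !mxE !ReE !ImE /=; conjC_simpl.
  by congr [:: _; _; _; _; _; _; _; _]; field: (mulCii C).
by rewrite (map_inj_uniq (mulrIn (oner_neq0 C))).
Qed.

End Quaternions.

Section BlockForms.
Variable C : numClosedFieldType.
Implicit Types x b c : C.

Definition bdiag x b1 b2 b3 : 'M[C]_(1 + 2) := block_mx x%:M 0 0 (pauli x b1 b2 b3).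

Definition boff (r : 'rV[C]_2) (w : 'cV[C]_2) : 'M[C]_(1 + 2) := block_mx 0 r w 0.

Lemma bdiagD x b1 b2 b3 y c1 c2 c3 :
  bdiag x b1 b2 b3 + bdiag y c1 c2 c3 = bdiag (x + y) (b1 + c1) (b2 + c2) (b3 + c3).
Proof. by rewrite /bdiag add_block_mx pauliD raddfD !addr0. Qed.

Lemma bdiagZ c x b1 b2 b3 : c *: bdiag x b1 b2 b3 = bdiag (c * x) (c * b1) (c * b2) (c * b3).
Proof. by rewrite /bdiag scale_block_mx pauliZ scale_scalar_mx !scaler0. Qed.

Lemma bdiag_scalar x : bdiag x 0 0 0 = x%:M.
Proof. by rewrite /bdiag pauli_scalar -scalar_mx_block. Qed.

Lemma boffD r w r' w' : boff r w + boff r' w' = boff (r + r') (w + w').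
Proof. by rewrite /boff add_block_mx !addr0. Qed.

Lemma boffZ c r w : c *: boff r w = boff (c *: r) (c *: w).
Proof. by rewrite /boff scale_block_mx !scaler0. Qed.

Lemma block_mx_bdiag_boff x b1 b2 b3 r w :
  block_mx x%:M r w (pauli x b1 b2 b3) = bdiag x b1 b2 b3 + boff r w.
Proof. by rewrite /bdiag /boff add_block_mx !addr0 !add0r. Qed.

Lemma mxtrace_Tmx_block lam (A : 'M[C]_1) r w (D : 'M[C]_2) :
  \tr (Tmx lam *m block_mx A r w D) = lam * (2 * \tr A - \tr D).
Proof.
rewrite /Tmx mulmx_block !mul0mx !addr0 !add0r mxtrace_block !mul_scalar_mx !mxtraceZ.
by ring.
Qed.

Lemma Tmx_unit (lam : C) : lam != 0 -> Tmx lam \in unitmx.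
Proof.
move=> lam_neq0; rewrite /Tmx block_diag_mx_unit !unitmxE !det_scalar !unitfE !expf_eq0 /=.
by rewrite mulf_eq0 oppr_eq0 pnatr_eq0 (negbTE lam_neq0).
Qed.

End BlockForms.

Section Seed.
Variables (C : numClosedFieldType) (a1 a2 a3 : C) (v : 'cV[C]_2).
Local Notation P := (pauli 8^-1 a1 a2 a3).
Local Notation Mo := (Mobs (Mseed a1 a2 a3 v)).

Lemma Mseed_block : Mseed a1 a2 a3 v = block_mx (8^-1)%:M (adjmx v) v P.
Proof.
by rewrite /Mseed /pauli scalar_mx_block !add_block_mx !addr0 !add0r.
Qed.

Lemma Mobs_Mseed_addN g b1 b2 b3 :
  g *m P *m adjmx g = pauli 8^-1 b1 b2 b3 -> Mo g + Mo (- g) = 2 *: bdiag 8^-1 b1 b2 b3.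
Proof.
move=> gPg; rewrite Mseed_block !Mobs_block adjmxN !mulmxN !mulNmx opprK add_block_mx.
by rewrite !subrr gPg /bdiag scale_block_mx !scaler_nat !mulr2n !addr0.
Qed.

Lemma Mobs_Mseed_subN g : Mo g - Mo (- g) = 2 *: boff (adjmx (g *m v)) (g *m v).
Proof.
rewrite Mseed_block !Mobs_block adjmxN !mulmxN !mulNmx opprK opp_block_mx add_block_mx.
by rewrite !opprK !subrr adjmxM /boff scale_block_mx !scaler_nat !mulr2n !addr0.
Qed.

Lemma sum_Mobs_Mseed : \sum_(g <- Qgrp C) Mo g = 1%:M.
Proof.
have -> : Qgrp C = flatten [seq [:: g; - g]
                     | g <- [:: 1%:M; 'i *: sigma1 C; 'i *: sigma2 C; 'i *: sigma3 C]] by [].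
rewrite big_flatten big_map /= !big_cons !big_nil !addr0.
rewrite (Mobs_Mseed_addN (pauli_conj_id _ _ _ _))
        (Mobs_Mseed_addN (pauli_conj_sigma1 _ _ _ _))
        (Mobs_Mseed_addN (pauli_conj_sigma2 _ _ _ _))
        (Mobs_Mseed_addN (pauli_conj_sigma3 _ _ _ _)).
by rewrite !bdiagZ !bdiagD -bdiag_scalar; f_equal; field.
Qed.

Lemma mxtrace_Tmx_Mobs lam g : g \in Qgrp C -> \tr (Tmx lam *m Mo g) = 0.
Proof.
move=> gQ; rewrite Mseed_block Mobs_block mxtrace_Tmx_block mxtrace_mulC mulmxA.
by rewrite Qgrp_unitary // mul1mx mxtrace_pauli mxtrace_scalar; field.
Qed.

End Seed.

Section Span.
Variables (C : numClosedFieldType) (a1 a2 a3 : C) (v : 'cV[C]_2).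
Hypotheses (a1_neq0 : a1 != 0) (a2_neq0 : a2 != 0) (a3_neq0 : a3 != 0) (v_neq0 : v != 0).
Local Notation Mo := (Mobs (Mseed a1 a2 a3 v)).
Local Notation V := (<<map Mo (Qgrp C)>>%VS).
Local Notation p := (v 0 0).
Local Notation q := (v 1 0).
Local Notation n := (p * p^* + q * q^*).

Lemma Mobs_in_span g : g \in Qgrp C -> Mo g \in V.
Proof. by move=> gQ; apply/memv_span/map_f. Qed.

(* [h] inverts the Hadamard matrix of sign patterns of the four pair sums. *)
Lemma bdiag_in_span x b1 b2 b3 : bdiag x b1 b2 b3 \in V.
Proof.
pose h e1 e2 e3 := (8 * x + e1 * b1 / a1 + e2 * b2 / a2 + e3 * b3 / a3) / 8.
have -> : bdiag x b1 b2 b3 =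
    h 1 1 1 *: (Mo 1%:M + Mo (- 1%:M))
  + h 1 (-1) (-1) *: (Mo ('i *: sigma1 C) + Mo (- ('i *: sigma1 C)))
  + h (-1) 1 (-1) *: (Mo ('i *: sigma2 C) + Mo (- ('i *: sigma2 C)))
  + h (-1) (-1) 1 *: (Mo ('i *: sigma3 C) + Mo (- ('i *: sigma3 C))).
  rewrite (Mobs_Mseed_addN v (pauli_conj_id _ _ _ _))
          (Mobs_Mseed_addN v (pauli_conj_sigma1 _ _ _ _))
          (Mobs_Mseed_addN v (pauli_conj_sigma2 _ _ _ _))
          (Mobs_Mseed_addN v (pauli_conj_sigma3 _ _ _ _)).
  by rewrite !scalerA !bdiagZ !bdiagD /h; f_equal; field; rewrite a1_neq0 a2_neq0 a3_neq0.
by rewrite !(memvD, memvZ) // Mobs_in_span // !inE eqxx ?orbT.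
Qed.

(* For the real inner product 'Re (x^* y), the four vectors g v are orthogonal
   of norm |v|, whence the denominators |v|^2. *)
Lemma boff_in_span r w : boff r w \in V.
Proof.
have n_neq0 : n != 0.
  rewrite paddr_eq0 ?mul_conjC_ge0 // !mul_conjC_eq0.
  apply: contra v_neq0 => /andP[/eqP p0 /eqP q0].
  apply/eqP/matrixP => i j; rewrite mxE (ord1 j).
  by case: i => [[|[|i]] ?] //; [rewrite -p0 | rewrite -q0]; congr (v _ _); apply: val_inj.
have -> : boff r w =
    (w 0 0 * p^* + w 1 0 * q^* + r 0 0 * p + r 0 1 * q) / (4 * n)
      *: (Mo 1%:M - Mo (- 1%:M))
  + 'i * (r 0 0 * q + r 0 1 * p - w 0 0 * q^* - w 1 0 * p^*) / (4 * n)
      *: (Mo ('i *: sigma1 C) - Mo (- ('i *: sigma1 C)))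
  + (w 0 0 * q^* - w 1 0 * p^* + r 0 0 * q - r 0 1 * p) / (4 * n)
      *: (Mo ('i *: sigma2 C) - Mo (- ('i *: sigma2 C)))
  + 'i * (r 0 0 * p - r 0 1 * q - w 0 0 * p^* + w 1 0 * q^*) / (4 * n)
      *: (Mo ('i *: sigma3 C) - Mo (- ('i *: sigma3 C))).
  rewrite !Mobs_Mseed_subN !scalerA !boffZ !boffD; f_equal; [apply/rowP => j | apply/colP => j];
    rewrite !mxE !big_ord_recl !big_ord0 /= !mxE;
    by case: (ord2P j) => -> /=; rewrite ?lift0_ord2; conjC_simpl; field: (mulCii C).
by rewrite !(memvD, memvZ) // ?memvN Mobs_in_span // !inE eqxx ?orbT.
Qed.

Lemma Tmx_kernel_in_span lam L : lam != 0 -> \tr (Tmx lam *m L) = 0 -> L \in V.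
Proof.
move=> lam_neq0; rewrite -[L]submxK; set A := ulsubmx L; set D := drsubmx L.
rewrite mxtrace_Tmx_block => /eqP; rewrite mulf_eq0 (negbTE lam_neq0) orFb subr_eq0 => /eqP.
rewrite [A]mx11_scalar mxtrace_scalar /mxtrace !big_ord_recl big_ord0 lift0_ord2 => trD.
rewrite [D]pauli_mx (_ : (D 0 0 + D 1 1) / 2 = A 0 0); last first.
  by move: trD; rewrite mulr1n addr0 => <-; field.
by rewrite block_mx_bdiag_boff memvD ?bdiag_in_span ?boff_in_span.
Qed.

End Span.

Theorem proposition6 (C : numClosedFieldType) (lam a1 a2 a3 : C) (v : 'cV[C]_2) :
  0 < lam ->
  a1 \is Num.real -> a2 \is Num.real -> a3 \is Num.real ->
  a1 != 0 -> a2 != 0 -> a3 != 0 -> v != 0 ->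
  psd (Mseed a1 a2 a3 v) ->
  let Mo := Mobs (Mseed a1 a2 a3 v) in
  [/\ observable (Qgrp C) Mo,
      covariant (Qgrp C) (@Urep C) Mo,
      (forall L : 'M[C]_(1 + 2),
         (exists c : 'M[C]_2 -> C, L = \sum_(g <- Qgrp C) c g *: Mo g)
         <-> \tr (Tmx lam *m L) = 0),
      PIC (Qgrp C) Mo
    & size (Qgrp C) = 8%N].
Proof.
move=> lam_gt0 _ _ _ a1_neq0 a2_neq0 a3_neq0 v_neq0 psdM Mo.
have lam_neq0 : lam != 0 by rewrite gt_eqF.
have span_kernel L : \tr (Tmx lam *m L) = 0 ->
    exists c : 'M[C]_2 -> C, L = \sum_(g <- Qgrp C) c g *: Mo g.
  move/(Tmx_kernel_in_span a1_neq0 a2_neq0 a3_neq0 v_neq0 lam_neq0).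
  exact/memv_span_coord/Qgrp_uniq.
split.
- by split; [exact: Qgrp_uniq | split; [move=> g _; exact: psd_congr | exact: sum_Mobs_Mseed]].
- by move=> g h _ _; exact: Mobs_covariant.
- move=> L; split=> [[c ->]|]; last exact: span_kernel.
  rewrite mulmx_sumr raddf_sum big1_seq // => g /= gQ.
  by rewrite -scalemxAr mxtraceZ mxtrace_Tmx_Mobs ?mulr0.
- exact: PIC_of_kernel_span (Tmx_unit lam_neq0) span_kernel.
- by [].
Qed.
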